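(* Let $\mathcal{P}\subseteq\mathbb{Z}_{\geq0}$, working with formal power series over a commutative ring $R\supseteq\mathbb{Q}$. Then $$\Xi^{\mathrm{COMP},\mathcal{P}}(z)=F^{\mathcal{P}}(z)\ln F^{\mathcal{P}}(z).$$
   Context: $[n]=\{1,\dots,n\}$. $\mathcal{F}_n$ is the set of functions $f:[n]\to[n]$ with $|f^{-1}(x)|\in\mathcal{P}$ for all $x\in[n]$ ($\mathcal{F}_0$ = the empty function); $c(f)$ is the number of weakly connected components of the functional graph (edges $i\to f(i)$). $F^\mathcal{P}(z)=\sum_n|\mathcal{F}_n|z^n/n!$, $F^{\mathrm{COMP},\mathcal{P}}(u,z)=\sum_n\frac{z^n}{n!}\sum_{f\in\mathcal{F}_n}u^{c(f)}$, and $\Xi^{\mathrm{COMP},\mathcal{P}}(z)=\big(\partial_uF^{\mathrm{COMP},\mathcal{P}}(u,z)\big)|_{u=1}$. For a series $G$ with constant term $1$, $\ln G=\sum_{i\ge1}(1-G)^i/i\cdot(-1)^{0}$ computed as $\ln\big((1-(1-G))^{-1}\big)$ with $\ln((1-w)^{-1})=\sum_{i\ge1}w^i/i$. *)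

From mathcomp Require Import all_boot all_order all_algebra.
Set Implicit Arguments. Unset Strict Implicit. Unset Printing Implicit Defensive.
Import GRing.Theory.
Local Open Scope ring_scope.

(* Formal power series over R, represented by their coefficient sequences:
   s n = coefficient of z^n. *)
Definition fps (R : Type) := nat -> R.

Section FPS.
Variable R : comUnitRingType.

Definition fps_one : fps R := fun n => if n == 0%N then 1 else 0.
Definition fps_sub (a b : fps R) : fps R := fun n => a n - b n.
Definition fps_mul (a b : fps R) : fps R :=
  fun n => \sum_(i < n.+1) a i * b (n - i)%N.
Fixpoint fps_pow (a : fps R) (k : nat) : fps R :=
  if k is k'.+1 then fps_mul a (fps_pow a k') else fps_one.

(* ln G for G with constant term 1: ln G = sum_{i>=1} (-1)^(i+1) (G-1)^i / i.
   Since G - 1 has zero constant term, (G-1)^i has no terms of degree < i,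
   so the coefficient of z^n only involves i = 1..n (exact, not a truncation). *)
Definition fps_ln (G : fps R) : fps R :=
  fun n => \sum_(1 <= i < n.+1)
             (-1) ^+ i.+1 * (i%:R)^-1 * fps_pow (fps_sub G fps_one) i n.
End FPS.

(* The functional graph of f : 'I_n -> 'I_n, edges i -> f i, as a symmetric
   relation (for weak connectivity). *)
Definition fgraph_sym (n : nat) (f : {ffun 'I_n -> 'I_n}) : rel 'I_n :=
  fun x y => (f x == y) || (f y == x).

Definition ncomp (n : nat) (f : {ffun 'I_n -> 'I_n}) : nat :=
  n_comp (fgraph_sym f) 'I_n.

Definition inF (P : pred nat) (n : nat) (f : {ffun 'I_n -> 'I_n}) : bool :=
  [forall x : 'I_n, P #|[set y | f y == x]|].

Definition FP (R : comUnitRingType) (P : pred nat) : fps R :=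
  fun n => #|[set f : {ffun 'I_n -> 'I_n} | inF P f]|%:R * ((n`!)%:R)^-1.

(* F^{COMP,P}(u,z) = sum_n z^n/n! sum_{f in F_n} u^{c(f)}; coefficient of z^n
   is a polynomial in u. *)
Definition FCOMP (R : comUnitRingType) (P : pred nat) : nat -> {poly R} :=
  fun n => ((n`!)%:R)^-1 *: \sum_(f : {ffun 'I_n -> 'I_n} | inF P f) 'X^(ncomp f).

Definition XiCOMP (R : comUnitRingType) (P : pred nat) : fps R :=
  fun n => (FCOMP R P n)^`().[1].

(* Marking a component of a P-function f on [n] splits f into a connected
   P-function on that component and an arbitrary P-function on its complement.
   Summing over components, resp. over points, gives
     sum_f c(f) = sum_k C(n,k) c_k a_(n-k)   and   n a_n = sum_k C(n,k) k c_k a_(n-k),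
   where a_k and c_k count all, resp. connected, P-functions on [k].  With C the
   exponential generating function of the c_k these read Xi = C F and zF' = zC' F.
   The truncated logarithm also satisfies zF' = z(ln F)' F, and since F(0) = 1 and
   positive integers are invertible this forces C = ln F. *)

From mathcomp Require Import all_boot all_order all_algebra.
From mathcomp Require Import zify ring.
From Stdlib Require Import FunctionalExtensionality.
Set Implicit Arguments. Unset Strict Implicit. Unset Printing Implicit Defensive.

Lemma connect_homo_in (U V : finType) (e1 : rel U) (e2 : rel V) (A : pred U) (m : U -> V) :
  (forall x y, A x -> e1 x y -> A y && e2 (m x) (m y)) ->
  forall x y, A x -> connect e1 x y -> connect e2 (m x) (m y).
Proof.
move=> hom x y Ax /connectP[p pth ->].
elim: p x Ax pth => [|z p IHp] x Ax /=; first by rewrite connect0.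
case/andP=> e1xz pth; case/andP: (hom _ _ Ax e1xz) => Az e2xz.
exact: connect_trans (connect1 e2xz) (IHp z Az pth).
Qed.

Definition funrel (T : finType) (f : {ffun T -> T}) : rel T :=
  fun x y => (f x == y) || (f y == x).
Definition component (T : finType) (f : {ffun T -> T}) x := [set y | connect (funrel f) x y].
Definition fconnected (T : finType) (f : {ffun T -> T}) :=
  [forall x, forall y, connect (funrel f) x y].
Definition fibres_in (P : pred nat) (T : finType) (f : {ffun T -> T}) :=
  [forall x, P #|[set y | f y == x]|].

Section FunctionalGraph.
Variables (P : pred nat) (T : finType).
Implicit Types (f g h : {ffun T -> T}) (S : {set T}).

Definition confined S g := [forall x, if x \in S then g x \in S else g x == x].
Definition fibres_in_on S g := [forall x in S, P #|[set y in S | g y == x]|].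
Definition connected_on S g := [forall x in S, forall y in S, connect (funrel g) x y].
Definition glue S g h : {ffun T -> T} := [ffun x => if x \in S then g x else h x].
Definition restr S f : {ffun T -> T} := [ffun x => if x \in S then f x else x].

Lemma connect_funrel_sym f : connect_sym (funrel f).
Proof. by apply/sym_connect_sym => x y; rewrite /funrel orbC. Qed.

Lemma confined_in S g x : confined S g -> x \in S -> g x \in S.
Proof. by move/forallP/(_ x) => + xS; rewrite xS. Qed.

Lemma confined_out S g x : confined S g -> x \notin S -> g x = x.
Proof. by move/forallP/(_ x) => + xS; rewrite (negbTE xS) => /eqP. Qed.

Section Glue.
Variables (S : {set T}) (g h : {ffun T -> T}).
Hypotheses (conf_g : confined S g) (conf_h : confined (~: S) h).
Let f := glue S g h.

Lemma glue_in x : x \in S -> f x = g x.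
Proof. by rewrite /f ffunE => ->. Qed.

Lemma glue_out x : x \notin S -> f x = h x.
Proof. by rewrite /f ffunE => /negbTE ->. Qed.

Lemma glue_mem x : (f x \in S) = (x \in S).
Proof.
have [xS|xNS] := boolP (x \in S); first by rewrite glue_in ?confined_in.
by rewrite glue_out //; apply/negbTE; rewrite -in_setC confined_in ?inE.
Qed.

Lemma glue_closed : closed (funrel f) S.
Proof. by move=> x y; case/orP=> /eqP <-; rewrite glue_mem. Qed.

Lemma fibres_in_glue : fibres_in P f = fibres_in_on S g && fibres_in_on (~: S) h.
Proof.
have fibreE x : [set y | f y == x] =
    if x \in S then [set y in S | g y == x] else [set y in ~: S | h y == x].
  apply/setP => y; case xS: (x \in S); case yS: (y \in S); rewrite !inE ?yS /=.
  - by rewrite glue_in ?yS.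
  - by apply: contraFF yS => /eqP fy; rewrite -glue_mem fy xS.
  - by apply: contraTF yS => /eqP fy; rewrite -glue_mem fy xS.
  - by rewrite glue_out ?yS.
apply/forallP/andP => [fib|[/forall_inP fibS /forall_inP fibNS] x].
  split; apply/forall_inP => x; rewrite ?inE => xS; move: (fib x).
    by rewrite fibreE xS.
  by rewrite fibreE (negbTE xS).
rewrite fibreE; case: ifP => xS; first exact: fibS.
by apply: fibNS; rewrite inE xS.
Qed.

Lemma component_glue x0 : x0 \in S -> (component f x0 == S) = connected_on S g.
Proof.
move=> x0S; apply/eqP/idP => [compE|conn_g].
  apply/forall_inP => x xS; apply/forall_inP => y yS.
  have cxy : connect (funrel f) x y.
    move: xS yS; rewrite -compE !inE => cx0x.
    by apply: connect_trans; rewrite connect_funrel_sym.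
  apply: (connect_homo_in (A := mem S) (m := id) _ xS cxy) => u v /= uS fuv.
  have vS : v \in S by rewrite -(glue_closed fuv).
  by rewrite vS /= /funrel -!glue_in.
apply/setP => y; rewrite inE; apply/idP/idP => [cy|yS].
  by rewrite -(closed_connect glue_closed cy).
have cg : connect (funrel g) x0 y by move/forall_inP/(_ x0 x0S)/forall_inP: conn_g; apply.
apply: (connect_homo_in (A := mem S) (m := id) _ x0S cg) => u v /= uS.
case/orP => /eqP guv.
  by rewrite -guv confined_in //= /funrel glue_in // guv eqxx.
have vS : v \in S.
  by apply: contraT => vNS; move: uS; rewrite -guv (confined_out conf_g vNS) (negbTE vNS).
by rewrite vS /funrel !glue_in // guv eqxx orbT.
Qed.

End Glue.

Section Restrict.
Variables (f : {ffun T -> T}) (x0 : T).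
Let S := component f x0.

Lemma component_mem x : (f x \in S) = (x \in S).
Proof.
have := connect_closed (connect_funrel_sym f) x0 (x := x) (y := f x).
by rewrite /S !inE => ->; rewrite // /funrel eqxx.
Qed.

Lemma confined_restr : confined S (restr S f).
Proof.
by apply/forallP => x; rewrite ffunE; case xS: (x \in S); rewrite /= ?component_mem ?xS.
Qed.

Lemma confined_restrC : confined (~: S) (restr (~: S) f).
Proof.
by apply/forallP => x; rewrite ffunE !in_setC; case xS: (x \in S); rewrite /= ?component_mem ?xS.
Qed.

Lemma glue_restr : glue S (restr S f) (restr (~: S) f) = f.
Proof. by apply/ffunP => x; rewrite !ffunE in_setC; case: (x \in S). Qed.

End Restrict.

Definition conn_parts S := [set g | [&& confined S g, fibres_in_on S g & connected_on S g]].
Definition parts S := [set h | confined S h && fibres_in_on S h].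

Lemma card_component_parts S x0 : x0 \in S ->
  #|[set f | fibres_in P f && (component f x0 == S)]| =
  #|conn_parts S| * #|parts (~: S)|.
Proof.
move=> x0S; rewrite -cardsX.
have -> : [set f | fibres_in P f && (component f x0 == S)] =
    [set glue S gh.1 gh.2 | gh in setX (conn_parts S) (parts (~: S))].
  apply/setP => f; rewrite inE; apply/andP/imsetP => [[fib_f /eqP compE]|[[g h]]].
    subst S; have conf1 := confined_restr f x0; have conf2 := confined_restrC f x0.
    move: fib_f; rewrite -{1}(glue_restr f x0) fibres_in_glue // => /andP[fib1 fib2].
    exists (restr (component f x0) f, restr (~: component f x0) f); last by rewrite glue_restr.
    rewrite !in_setX !in_set conf1 conf2 fib1 fib2 /=.
    by rewrite -(component_glue conf1 conf2 x0S) glue_restr eqxx.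
  rewrite !inE /= => /andP[/and3P[conf_g fib_g conn_g] /andP[conf_h fib_h]] ->.
  by rewrite fibres_in_glue // fib_g fib_h component_glue.
apply: card_in_imset => -[g h] [g' h']; rewrite !inE /=.
move=> /andP[/and3P[cg _ _] /andP[ch _]] /andP[/and3P[cg' _ _] /andP[ch' _]] E.
have Ex x := congr1 (fun k : {ffun T -> T} => k x) E.
congr pair; apply/ffunP => x; case xS: (x \in S).
- by move: (Ex x); rewrite /= !glue_in.
- by rewrite (confined_out cg) ?xS // (confined_out cg') ?xS.
- by rewrite (confined_out ch) ?inE ?xS // (confined_out ch') ?inE ?xS.
- by move: (Ex x); rewrite /= !glue_out ?xS.
Qed.

Section Relabel.
Variables (S : {set T}) (x0 : T).
Hypothesis x0S : x0 \in S.
Local Notation I := 'I_#|S|.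

Let sg (i : I) : T := enum_val i.
Let ps (x : T) : I := enum_rank_in x0S x.
Let sgP i : sg i \in S := enum_valP i.
Let psK x : x \in S -> sg (ps x) = x := @enum_rankK_in _ _ _ x0S x.
Let sgK i : ps (sg i) = i := enum_valK_in x0S i.
Let sg_inj : injective sg := can_inj sgK.

Definition lift_fun (u : {ffun I -> I}) : {ffun T -> T} :=
  [ffun x => if x \in S then sg (u (ps x)) else x].
Definition proj_fun (g : {ffun T -> T}) : {ffun I -> I} := [ffun i => ps (g (sg i))].

Lemma lift_fun_out u x : x \notin S -> lift_fun u x = x.
Proof. by rewrite ffunE => /negbTE ->. Qed.

Lemma lift_fun_enum u i : lift_fun u (sg i) = sg (u i).
Proof. by rewrite ffunE sgP sgK. Qed.

Lemma confined_lift_fun u : confined S (lift_fun u).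
Proof.
apply/forallP => x; case: ifP => xS; first by rewrite -(psK xS) lift_fun_enum sgP.
by rewrite lift_fun_out ?xS.
Qed.

Lemma lift_funK : cancel lift_fun proj_fun.
Proof. by move=> u; apply/ffunP => i; rewrite ffunE lift_fun_enum sgK. Qed.

Lemma proj_funK g : confined S g -> lift_fun (proj_fun g) = g.
Proof.
move=> conf_g; apply/ffunP => x; rewrite !ffunE; case: ifP => xS.
  by rewrite psK ?confined_in // psK.
by rewrite (confined_out conf_g) ?xS.
Qed.

Lemma card_fibre_lift_fun u i :
  #|[set y in S | lift_fun u y == sg i]| = #|[set j | u j == i]|.
Proof.
rewrite -(card_imset _ sg_inj); apply: eq_card => y; rewrite !inE.
apply/andP/imsetP => [[yS]|[j]].
  by rewrite -(psK yS) lift_fun_enum (inj_eq sg_inj) => uy; exists (ps y); rewrite ?inE ?psK.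
by rewrite inE => /eqP <- ->; rewrite sgP lift_fun_enum.
Qed.

Lemma fibres_in_on_lift_fun u : fibres_in_on S (lift_fun u) = fibres_in P u.
Proof.
apply/forall_inP/forallP => [fib i|fib x xS]; first by rewrite -card_fibre_lift_fun fib ?sgP.
by rewrite -(psK xS) card_fibre_lift_fun.
Qed.

Lemma connected_on_lift_fun u : connected_on S (lift_fun u) = fconnected u.
Proof.
have funrel_lift i j : funrel (lift_fun u) (sg i) (sg j) = funrel u i j.
  by rewrite /funrel !lift_fun_enum !(inj_eq sg_inj).
apply/forall_inP/forallP => [conn i|conn x xS].
  apply/forallP => j; rewrite -(sgK i) -(sgK j).
  move/forall_inP: (conn _ (sgP i)) => /(_ _ (sgP j)).
  apply: (connect_homo_in (A := mem S) _ (sgP i)) => x y /= xS fxy.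
  have yS : y \in S.
    case/orP: fxy => /eqP fx; first by rewrite -fx confined_in ?confined_lift_fun.
    by apply: contraTT xS => yNS; rewrite -fx lift_fun_out.
  by rewrite yS -funrel_lift !psK.
apply/forall_inP => y yS; rewrite -(psK xS) -(psK yS).
move/forallP/(_ (ps y)): (conn (ps x)).
by apply: (connect_homo_in (A := predT) _ isT) => i j _; rewrite funrel_lift.
Qed.

Lemma card_parts_lift_fun :
  #|parts S| = #|[set u : {ffun I -> I} | fibres_in P u]|.
Proof.
rewrite -(card_imset _ (can_inj lift_funK)); apply: eq_card => g; rewrite !inE.
apply/andP/imsetP => [[conf_g fib_g]|[u]].
  by exists (proj_fun g); rewrite ?inE -?fibres_in_on_lift_fun proj_funK.
by rewrite inE => fib_u ->; rewrite confined_lift_fun fibres_in_on_lift_fun.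
Qed.

Lemma card_conn_parts_lift_fun :
  #|conn_parts S| = #|[set u : {ffun I -> I} | fibres_in P u && fconnected u]|.
Proof.
rewrite -(card_imset _ (can_inj lift_funK)); apply: eq_card => g; rewrite !inE.
apply/and3P/imsetP => [[conf_g fib_g conn_g]|[u]].
  exists (proj_fun g); rewrite ?proj_funK // inE.
  by rewrite -fibres_in_on_lift_fun -connected_on_lift_fun proj_funK ?fib_g.
rewrite inE => /andP[fib_u conn_u] ->.
by rewrite confined_lift_fun fibres_in_on_lift_fun connected_on_lift_fun.
Qed.

End Relabel.
End FunctionalGraph.

Definition nfun (P : pred nat) k := #|[set u : {ffun 'I_k -> 'I_k} | fibres_in P u]|.
Definition nconn (P : pred nat) k :=
  #|[set u : {ffun 'I_k -> 'I_k} | fibres_in P u && fconnected u]|.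

Lemma nfun0 P : nfun P 0 = 1%N.
Proof.
rewrite /nfun (_ : [set u | _] = setT) ?cardsT ?card_ffun ?card_ord //.
by apply/setP => u; rewrite !inE; apply/forallP => -[].
Qed.

Section Counting.
Variables (P : pred nat) (T : finType).
Implicit Types (f : {ffun T -> T}) (S : {set T}).

Lemma card_parts S : #|parts P S| = nfun P #|S|.
Proof.
have [->|[x0 x0S]] := set_0Vmem S; last by rewrite (card_parts_lift_fun P x0S).
rewrite cards0 nfun0; apply/eqP/cards1P; exists [ffun x => x]; apply/setP => g.
rewrite !inE; apply/andP/eqP => [[conf_g _]|->].
  by apply/ffunP => x; rewrite ffunE (confined_out conf_g) ?inE.
by split; [apply/forallP => x; rewrite inE ffunE | apply/forall_inP => x; rewrite inE].
Qed.

Lemma card_component S x0 : x0 \in S ->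
  #|[set f | fibres_in P f && (component f x0 == S)]| =
  (nconn P #|S| * nfun P (#|T| - #|S|))%N.
Proof.
move=> x0S; rewrite card_component_parts // (card_conn_parts_lift_fun P x0S) card_parts.
by rewrite [in (#|T| - _)%N](cardsCs S) subKn ?max_card.
Qed.

Lemma sum_components (w : T -> {set T} -> nat) :
  \sum_(f | fibres_in P f) \sum_x w x (component f x) =
  \sum_(S : {set T}) nconn P #|S| * nfun P (#|T| - #|S|) * \sum_(x in S) w x S.
Proof.
rewrite exchange_big /=.
transitivity (\sum_x \sum_(S : {set T})
                (x \in S) * (nconn P #|S| * nfun P (#|T| - #|S|) * w x S)).
  apply: eq_bigr => x _; rewrite (partition_big (fun f => component f x) predT) //=.
  apply: eq_bigr => S _.
  rewrite (eq_bigr (fun _ => w x S)); last by move=> f /andP[_ /eqP ->].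
  rewrite (eq_bigl (fun f => f \in [set f | fibres_in P f && (component f x == S)])); last first.
    by move=> f; rewrite inE.
  rewrite sum_nat_const; have [xS|xNS] := boolP (x \in S).
    by rewrite card_component //= mul1n.
  rewrite mul0n (_ : [set f | _] = set0) ?cards0 //; apply/setP => f; rewrite !inE.
  by apply: contraNF xNS => /andP[_ /eqP <-]; rewrite inE connect0.
rewrite exchange_big /=; apply: eq_bigr => S _.
rewrite big_distrr /= [in RHS]big_mkcond /=; apply: eq_bigr => x _.
by case: (x \in S); rewrite ?mul1n ?mul0n ?muln0.
Qed.

Lemma sum_set_card (g : nat -> nat) :
  \sum_(S : {set T}) g #|S| = \sum_(k < #|T|.+1) 'C(#|T|, k) * g k.
Proof.
rewrite (partition_big (fun S : {set T} => inord #|S| : 'I_#|T|.+1) predT) //=.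
have cardK (S : {set T}) : (inord #|S| : 'I_#|T|.+1) = #|S| :> nat.
  by apply: inordK; rewrite ltnS max_card.
apply: eq_bigr => k _; rewrite (eq_bigr (fun _ => g k)) => [|S /eqP <-]; last by rewrite cardK.
rewrite sum_nat_const -(card_draws T k); congr (_ * _); apply: eq_card => S.
by rewrite inE unfold_in /= cardK.
Qed.

Lemma n_comp_funrel f :
  n_comp (funrel f) T = \sum_x (odflt x [pick y in component f x] == x).
Proof.
rewrite /n_comp_mem -sum1_card big_mkcond /=; apply: eq_bigr => x _.
rewrite !inE andbT /roots /fingraph.root (eq_pick (Q := mem (component f x))) => [|y].
  by case: (_ == _).
by rewrite -[RHS]/(y \in component f x) inE.
Qed.

Lemma sum_pick_root S : \sum_(x in S) (odflt x [pick y in S] == x) = (S != set0).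
Proof.
have [->|[y yS]] := set_0Vmem S; first by rewrite eqxx big_pred0 // => x; rewrite inE.
have -> : S != set0 by apply/set0Pn; exists y.
case: pickP => [z zS|/(_ y)]; last by rewrite yS.
rewrite (bigD1 z) //= eqxx big1 // => x /andP[_ zx].
by rewrite eq_sym (negbTE zx).
Qed.

Lemma sum_n_comp :
  \sum_(f | fibres_in P f) n_comp (funrel f) T =
  \sum_(k < #|T|.+1) 'C(#|T|, k) * (nconn P k * nfun P (#|T| - k) * (0 < k)).
Proof.
under eq_bigr do rewrite n_comp_funrel.
rewrite (sum_components (fun x S => odflt x [pick y in S] == x))
  -(sum_set_card (fun k => nconn P k * nfun P (#|T| - k) * (0 < k))).
by apply: eq_bigr => S _; rewrite sum_pick_root card_gt0.
Qed.

Lemma card_fibres_in_pointed :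
  #|T| * #|[set f : {ffun T -> T} | fibres_in P f]| =
  \sum_(k < #|T|.+1) 'C(#|T|, k) * (nconn P k * nfun P (#|T| - k) * k).
Proof.
rewrite -(sum_set_card (fun k => nconn P k * nfun P (#|T| - k) * k)).
transitivity (\sum_(f in [set f : {ffun T -> T} | fibres_in P f]) \sum_(x : T) 1%N).
  by rewrite sum_nat_const mulnC sum1_card.
rewrite (eq_bigl (@fibres_in P T)) => [|f]; last by rewrite inE.
rewrite (sum_components (fun _ _ => 1%N)); apply: eq_bigr => S _; by rewrite sum1_card.
Qed.

End Counting.

Import GRing.Theory.
Local Open Scope ring_scope.

Section TruncatedLog.
Variable R : comUnitRingType.
Hypothesis HQ : forall n : nat, (n.+1)%:R \is a @GRing.unit R.

Lemma coef_exp_lt (p : {poly R}) k m : p`_0 = 0 -> (m < k)%N -> (p ^+ k)`_m = 0.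
Proof.
move=> p0; elim: k m => [//|k IHk] m ltmk.
rewrite exprS coefM big1 // => -[[|j] /= ltjm] _; first by rewrite p0 mul0r.
by rewrite IHk ?mulr0 //; lia.
Qed.

Lemma coef_exp_fps_pow (G : fps R) (p : {poly R}) n :
  (forall j, (j <= n)%N -> p`_j = G j) ->
  forall k j, (j <= n)%N -> (p ^+ k)`_j = fps_pow G k j.
Proof.
move=> pG; elim=> [|k IHk] j le_jn /=.
  by rewrite expr0 coef1 /fps_one; case: (j == 0%N).
rewrite exprS coefM /fps_mul; apply: eq_bigr => -[i /= lt_ij] _.
by rewrite pG ?IHk ?(leq_trans (leq_subr _ _)) // (leq_trans _ le_jn).
Qed.

Lemma coefXM_deriv (p : {poly R}) k : ('X * p^`())`_k = k%:R * p`_k.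
Proof. by rewrite coefXM; case: k => [|k] /=; rewrite ?mul0r // coef_deriv mulr_natl. Qed.

Definition ln_poly (h : {poly R}) n := \sum_(i < n) ((-1) ^+ i.+2 / i.+1%:R) *: h ^+ i.+1.

(* The derivative of the truncated series of [ln (1 + h)] telescopes against [1 + h]. *)
Lemma deriv_ln_poly h n : (1 + h) * (ln_poly h n)^`() = h^`() * (1 - (- h) ^+ n).
Proof.
have -> : (ln_poly h n)^`() = h^`() * \sum_(i < n) (- h) ^+ i.
  rewrite raddf_sum mulr_sumr; apply: eq_bigr => i _.
  have coefK : ((-1) ^+ i.+2 / i.+1%:R) *+ i.+1 = (-1) ^+ i :> R.
    by rewrite -mulr_natr mulrVK ?HQ // !exprS !mulN1r opprK.
  rewrite [LHS]/= derivZ deriv_exp -scalerMnr scalerMnl coefK.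
  by rewrite -mul_polyC rmorphXn /= polyCN polyC1 [in RHS]exprNn mulrCA.
by rewrite mulrCA -opprB subrX1 -mulNr opprB opprK.
Qed.

Lemma coef_ln_poly (G : fps R) (h : {poly R}) n : G 0%N = 1 ->
  (forall j, (j <= n)%N -> h`_j = fps_sub G (fps_one R) j) ->
  forall m, (m <= n)%N -> (ln_poly h n)`_m = fps_ln G m.
Proof.
move=> G0 hG m le_mn.
have h0 : h`_0 = 0 by rewrite hG // /fps_sub /fps_one G0 subrr.
rewrite /fps_ln big_add1 /= big_mkord.
rewrite (big_ord_widen n
  (fun i => (-1) ^+ i.+2 / i.+1%:R * fps_pow (fps_sub G (fps_one R)) i.+1 m) le_mn).
rewrite coef_sum [RHS]big_mkcond /=; apply: eq_bigr => i _; rewrite coefZ.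
case: ifP => lt_im; first by rewrite (coef_exp_fps_pow hG).
by rewrite coef_exp_lt ?mulr0 // ltnS leqNgt lt_im.
Qed.

Lemma fps_ln_deriv (G : fps R) n : G 0%N = 1 ->
  n%:R * G n = \sum_(k < n.+1) (k%:R * fps_ln G k) * G (n - k)%N.
Proof.
move=> G0; pose h : {poly R} := \poly_(i < n.+1) fps_sub G (fps_one R) i.
have hG j : (j <= n)%N -> h`_j = fps_sub G (fps_one R) j.
  by move=> le_jn; rewrite coef_poly ltnS le_jn.
have h0 : h`_0 = 0 by rewrite hG // /fps_sub /fps_one G0 subrr.
have gG j : (j <= n)%N -> (1 + h)`_j = G j.
  by move=> le_jn; rewrite coefD coef1 hG // /fps_sub /fps_one; case: eqP; rewrite addrC subrK.
transitivity (('X * (ln_poly h n)^`() * (1 + h))`_n); last first.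
  rewrite coefM; apply: eq_bigr => -[k /= lt_kn] _.
  by rewrite coefXM_deriv (coef_ln_poly G0 hG) ?gG ?leq_subr // -ltnS.
rewrite -mulrA [_ * (1 + h)]mulrC deriv_ln_poly !mulrBr mulr1 coefB coefXM_deriv.
have -> : ('X * (h^`() * (- h) ^+ n))`_n = 0.
  rewrite coefXM; case: eqP => // /eqP n_neq0; rewrite coefM big1 // => -[j /= lt_j] _.
  by rewrite coef_exp_lt ?mulr0 ?coefN ?h0 ?oppr0 //; lia.
rewrite subr0 hG // /fps_sub /fps_one.
by case: eqP => [->|_]; rewrite ?mul0r ?subr0.
Qed.
End TruncatedLog.

Lemma fps_mulC (R : comUnitRingType) (a b : fps R) n : fps_mul a b n = fps_mul b a n.
Proof.
rewrite /fps_mul (reindex_inj rev_ord_inj); apply: eq_bigr => -[i /= lt_in] _.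
by rewrite subSS subKn 1?mulrC // -ltnS.
Qed.

Section DerivativeUniqueness.
Variable R : comUnitRingType.
Hypothesis HQ : forall n : nat, (n.+1)%:R \is a @GRing.unit R.

Lemma eq_fps_deriv_mul (G A B : fps R) : G 0%N = 1 -> A 0%N = B 0%N ->
  (forall n, \sum_(k < n.+1) (k%:R * A k) * G (n - k)%N =
             \sum_(k < n.+1) (k%:R * B k) * G (n - k)%N) ->
  A =1 B.
Proof.
move=> G0 AB0 eqAB.
have D0 n : n%:R * (A n - B n) = 0.
  elim/ltn_ind: n => n IHn; have := eqAB n; move/eqP; rewrite -subr_eq0 -sumrB.
  rewrite big_ord_recr /= subnn G0 !mulr1 big1 ?add0r => [|k _]; last first.
    by rewrite -mulrBl -mulrBr IHn ?mul0r.
  by rewrite -mulrBr => /eqP.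
case=> [//|n]; apply: (mulrI (HQ n)); apply/eqP.
by rewrite -subr_eq0 -mulrBr D0.
Qed.
End DerivativeUniqueness.

Section ConnectedEGF.
Variable R : comUnitRingType.
Hypothesis HQ : forall n : nat, (n.+1)%:R \is a @GRing.unit R.
Variable P : pred nat.

(* [nconn P 0 = 1] counts the empty function, which has no component. *)
Definition conn_egf : fps R := fun n => if n is 0 then 0 else (nconn P n)%:R / (n`!)%:R.

Lemma FP0 : FP R P 0 = 1.
Proof. by rewrite /FP -/(nfun P 0) nfun0 fact0 invr1 mulr1. Qed.

Lemma natr_unit m : (0 < m)%N -> m%:R \is a @GRing.unit R.
Proof. by case: m. Qed.

Lemma binomial_egf n k (c a : nat) : (k <= n)%N ->
  ('C(n, k) * (c * a))%:R / (n`!)%:R =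
  c%:R / (k`!)%:R * (a%:R / ((n - k)`!)%:R) :> R.
Proof.
move=> le_kn; rewrite -(bin_fact le_kn) !natrM.
rewrite !invrM ?unitrM ?natr_unit ?fact_gt0 ?bin_gt0 //.
by rewrite mulrC -!mulrA mulKr ?natr_unit ?bin_gt0 //; ring.
Qed.

Lemma XiCOMP_conn n : XiCOMP R P n = fps_mul conn_egf (FP R P) n.
Proof.
have sum_ncomp : (\sum_(f : {ffun 'I_n -> 'I_n} | inF P f) ncomp f =
    \sum_(k < n.+1) 'C(n, k) * (nconn P k * nfun P (n - k) * (0 < k)))%N.
  by have := sum_n_comp P 'I_n; rewrite card_ord.
rewrite /XiCOMP /FCOMP derivZ hornerZ raddf_sum horner_sum.
under eq_bigr do rewrite /= derivXn hornerMn hornerXn expr1n.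
rewrite -natr_sum sum_ncomp natr_sum mulr_sumr /fps_mul.
apply: eq_bigr => -[[|k] /= lt_kn] _.
  by rewrite !muln0 mulr0 mul0r.
by rewrite muln1 mulrC binomial_egf.
Qed.

Lemma FP_deriv_conn n :
  n%:R * FP R P n = \sum_(k < n.+1) (k%:R * conn_egf k) * FP R P (n - k)%N.
Proof.
have card_marked : (n * nfun P n =
    \sum_(k < n.+1) 'C(n, k) * (nconn P k * nfun P (n - k) * k))%N.
  by have := card_fibres_in_pointed P 'I_n; rewrite card_ord.
rewrite /FP mulrA -natrM -/(nfun P n) card_marked natr_sum mulr_suml.
apply: eq_bigr => -[[|k] /= lt_kn] _; first by rewrite !muln0 !mul0r.
rewrite (_ : _ * _ * k.+1 = nconn P k.+1 * k.+1 * nfun P (n - k.+1))%N; last by ring.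
rewrite binomial_egf // natrM; ring.
Qed.

Lemma conn_egf_ln : conn_egf =1 fps_ln (FP R P).
Proof.
apply: (eq_fps_deriv_mul HQ FP0); first by rewrite /fps_ln big_geq.
by move=> n; rewrite -FP_deriv_conn -fps_ln_deriv ?FP0.
Qed.

End ConnectedEGF.

Theorem theorem5p8 (R : comUnitRingType)
  (HQ : forall n : nat, (n.+1)%:R \is a @GRing.unit R)
  (P : pred nat) :
  XiCOMP R P = fps_mul (FP R P) (fps_ln (FP R P)).
Proof.
apply: functional_extensionality => n.
rewrite XiCOMP_conn // fps_mulC; apply: eq_bigr => k _.
by rewrite conn_egf_ln.
Qed.
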